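(* Let $(B,\lfloor\cdot,\cdot\rfloor)$ be an SSD space with quadratic form $q$ and let $P\subset B$ be premaximally $q$-positive. Then either $\Phi_P(b)\ge q(b)$ for all $b\in B$, or $P^{\pi}=\operatorname{dom}\Phi_P$ and $P^{\pi}$ is an affine subset of $B$.
   Context: An SSD space is a pair $(B,\lfloor\cdot,\cdot\rfloor)$ with $B$ a nonzero real vector space and $\lfloor\cdot,\cdot\rfloor$ a symmetric bilinear form; $q(b)=\frac12\lfloor b,b\rfloor$. A nonempty $A\subset B$ is $q$-positive if $q(b-c)\ge0$ for all $b,c\in A$; maximally $q$-positive if $q$-positive and not properly contained in another $q$-positive set. $A^{\pi}:=\{b\in B: q(b-a)\ge0\ \forall a\in A\}$. $\Phi_A(x)=\sup_{a\in A}\{\lfloor x,a\rfloor-q(a)\}$ for nonempty $A$, and $\operatorname{dom}\Phi_A=\{x:\Phi_A(x)<+\infty\}$. A $q$-positive set $P$ is premaximally $q$-positive if there is a unique maximally $q$-positive set containing $P$. *)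

From HB Require Import structures.
From mathcomp Require Import all_boot all_order all_algebra.
From mathcomp Require Import all_classical all_reals ereal.
Set Implicit Arguments. Unset Strict Implicit. Unset Printing Implicit Defensive.
Import Order.TTheory GRing.Theory Num.Theory.
Local Open Scope classical_set_scope.
Local Open Scope ring_scope.

Section SSD.
Variables (R : realType) (B : lmodType R).

(* symmetric bilinear form (linearity in the first argument + symmetry
   gives bilinearity) *)
Definition sym_bilinear (f : B -> B -> R) : Prop :=
  (forall x y, f x y = f y x) /\
  (forall (a : R) x y z, f (a *: x + y) z = a * f x z + f y z).

Definition SSD (f : B -> B -> R) : Prop :=
  (exists b : B, b != 0) /\ sym_bilinear f.

Definition qf (f : B -> B -> R) (b : B) : R := f b b / 2.

Definition q_positive (f : B -> B -> R) (A : set B) : Prop :=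
  A !=set0 /\ forall b c, A b -> A c -> 0 <= qf f (b - c).

Definition max_q_positive (f : B -> B -> R) (A : set B) : Prop :=
  q_positive f A /\ forall A', q_positive f A' -> A `<=` A' -> A' = A.

Definition premax_q_positive (f : B -> B -> R) (P : set B) : Prop :=
  q_positive f P /\
  exists M, (max_q_positive f M /\ P `<=` M) /\
    forall M', max_q_positive f M' -> P `<=` M' -> M' = M.

Definition pi_set (f : B -> B -> R) (A : set B) : set B :=
  [set b | forall a, A a -> 0 <= qf f (b - a)].

Definition Phi (f : B -> B -> R) (A : set B) (x : B) : \bar R :=
  ereal_sup [set (f x a - qf f a)%:E | a in A].

Definition dom_Phi (f : B -> B -> R) (A : set B) : set B :=
  [set x | (Phi f A x < +oo)%E].

Definition affine_set (S : set B) : Prop :=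
  forall (l : R) x y, S x -> S y -> S (l *: x + (1 - l) *: y).

End SSD.

(* Suppose Phi_P(b0) < q(b0).  Since Phi_P is a supremum of affine functions while q is
   quadratic, the strict inequality survives a small step from b0 towards any c in dom Phi_P.
   Points where Phi_P <= q form P^pi, which is q-positive because it lies inside the unique
   maximal q-positive extension of P.  Stepping from b0 towards z, and then from there towards
   the point reached from b0 towards x, yields two points of P^pi whose difference is a
   positive multiple of x - z; so dom Phi_P is q-positive, and equals P^pi.  Finally a convex
   q-positive set containing P has its whole affine hull inside P^pi. *)
From HB Require Import structures.
From mathcomp Require Import all_boot all_order all_algebra.
From mathcomp Require Import all_classical all_reals ereal.
From mathcomp Require Import ring lra.
Import Order.TTheory GRing.Theory Num.Theory.
Local Open Scope classical_set_scope.
Local Open Scope ring_scope.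
Set Implicit Arguments. Unset Strict Implicit.

Lemma small_quadratic (R : realFieldType) (A C d : R) : 0 < d ->
  exists2 s, 0 < s <= 1 & s * A + s ^+ 2 * C <= d.
Proof.
move=> d_gt0; have A0 := normr_ge0 A; have C0 := normr_ge0 C.
have den_gt0 : 0 < d + `|A| + `|C| by lra.
set s := d / (d + `|A| + `|C|).
have s_gt0 : 0 < s by apply: divr_gt0.
have sden : s * (d + `|A| + `|C|) = d by rewrite divfK ?gt_eqF.
have s_le1 : s <= 1 by rewrite ler_pdivrMr // mul1r; lra.
exists s; first by rewrite s_gt0 s_le1.
have := ler_norm A; have := ler_norm C; rewrite !mulrDr expr2 in sden *; nra.
Qed.

Lemma comb_same (R : pzRingType) (B : lmodType R) (l : R) (y : B) :
  l *: y + (1 - l) *: y = y.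
Proof. by rewrite -scalerDl addrC subrK scale1r. Qed.

Lemma comb_subr (R : pzRingType) (B : lmodType R) (l : R) (x y a : B) :
  (l *: x + (1 - l) *: y) - a = l *: (x - a) + (1 - l) *: (y - a).
Proof. by rewrite !scalerBr addrACA -opprD comb_same. Qed.

Lemma comb_diff (R : pzRingType) (B : lmodType R) (l : R) (x z y : B) :
  (l *: x + (1 - l) *: y) - (l *: z + (1 - l) *: y) = l *: (x - z).
Proof. by rewrite opprD addrACA subrr addr0 scalerBr. Qed.

Section BilinearForm.
Variables (R : realType) (B : lmodType R) (f : B -> B -> R).
Hypothesis fsym : forall x y, f x y = f y x.
Hypothesis flin : forall (a : R) x y z, f (a *: x + y) z = a * f x z + f y z.

Lemma f0l z : f 0 z = 0.
Proof.
have /eqP := flin 1 0 0 z.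
by rewrite scaler0 addr0 mul1r addrC -subr_eq subrr eq_sym => /eqP.
Qed.

Lemma fDl x y z : f (x + y) z = f x z + f y z.
Proof. by have := flin 1 x y z; rewrite scale1r mul1r. Qed.

Lemma fZl a x z : f (a *: x) z = a * f x z.
Proof. by have := flin a x 0 z; rewrite addr0 f0l addr0. Qed.

Lemma fDr x y z : f z (x + y) = f z x + f z y.
Proof. by rewrite fsym fDl (fsym x) (fsym y). Qed.

Lemma fZr a x z : f z (a *: x) = a * f z x.
Proof. by rewrite fsym fZl fsym. Qed.

Lemma qfZ a x : qf f (a *: x) = a ^+ 2 * qf f x.
Proof. by rewrite /qf fZl fZr expr2 !mulrA. Qed.

Lemma qfD x y : qf f (x + y) = qf f x + f x y + qf f y.
Proof. by rewrite /qf fDl !fDr (fsym y x); field. Qed.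

Lemma qfB x y : qf f (x - y) = qf f x - f x y + qf f y.
Proof. by rewrite -[- y]scaleN1r qfD qfZ fZr; ring. Qed.

Lemma qfBC x y : qf f (x - y) = qf f (y - x).
Proof. by rewrite -opprB -[- (y - x)]scaleN1r qfZ; ring. Qed.

Lemma qf0 : qf f 0 = 0.
Proof. by rewrite /qf f0l mul0r. Qed.

Lemma f_comb l x y a :
  f (l *: x + (1 - l) *: y) a = l * f x a + (1 - l) * f y a.
Proof. by rewrite fDl !fZl. Qed.

Lemma qf_comb l x y :
  qf f (l *: x + (1 - l) *: y) = qf f y + l * f y (x - y) + l ^+ 2 * qf f (x - y).
Proof.
have -> : l *: x + (1 - l) *: y = y + l *: (x - y).
  by rewrite scalerBl scale1r scalerBr addrCA [l *: x + _]addrC.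
by rewrite qfD fZr qfZ.
Qed.

Lemma convex_q_positive_affine (D : set B) :
  (forall l x y, 0 <= l <= 1 -> D x -> D y -> D (l *: x + (1 - l) *: y)) ->
  (forall x y, D x -> D y -> 0 <= qf f (x - y)) ->
  forall l x y a, D x -> D y -> D a -> 0 <= qf f (l *: x + (1 - l) *: y - a).
Proof.
move=> Dconv Dpos l x y a + + Da.
wlog l_ge : l x y / 1 / 2 <= l => [wlog_l Dx Dy|Dx Dy].
  have [|l_lt] := leP (1 / 2) l; first by move=> l_ge; apply: wlog_l.
  by rewrite [l *: x + _]addrC -[l in l *: x](subKr 1 l); apply: wlog_l => //; lra.
have [l_le1|l_gt1] := leP l 1.
  by apply: Dpos => //; apply: Dconv => //; rewrite l_le1 andbT; lra.
(* [w - a = (2l - 1) (u - v)] with [u], [v] on the segments [a, x] and [y, a] *)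
set mu := l / (2 * l - 1).
have k_neq0 : 2 * l - 1 != 0 by rewrite gt_eqF //; lra.
have mu_ge0 : 0 <= mu by rewrite divr_ge0 //; lra.
have mu_le1 : mu <= 1 by rewrite ler_pdivrMr ?mul1r; lra.
set u := mu *: x + (1 - mu) *: a; set v := (1 - mu) *: y + (1 - (1 - mu)) *: a.
have Du : D u by apply: Dconv; rewrite ?mu_ge0.
have Dv : D v by apply: Dconv => //; apply/andP; split; lra.
have uv : u - v = (u - a) - (v - a) by rewrite opprB addrA subrK.
have := Dpos _ _ Du Dv.
rewrite uv comb_subr (comb_subr (1 - mu)) comb_subr !subrr !scaler0 !addr0.
have -> : mu *: (x - a) - (1 - mu) *: (y - a)
          = (2 * l - 1)^-1 *: (l *: (x - a) + (1 - l) *: (y - a)).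
  rewrite [RHS]scalerDr !scalerA -scaleNr.
  by congr (_ *: _ + _ *: _); rewrite /mu; field.
by rewrite qfZ pmulr_rge0 // exprn_gt0 // invr_gt0; lra.
Qed.

End BilinearForm.

Section MaximalExtension.
Variables (R : realType) (B : lmodType R) (f : B -> B -> R).

Lemma q_positive_sub_max (S : set B) : q_positive f S ->
  exists M, max_q_positive f M /\ S `<=` M.
Proof.
move=> [S0 Spos].
pose ext := [set A : set B | q_positive f (S `|` A)].
have [A [extA Amax]] : exists A, ext A /\ forall A', A `<` A' -> ~ ext A'.
  apply: Zorn_bigcup => F Fext Ftot; split; first by case: S0 => s Ss; exists s; left.
  move=> u v [Su|[X FX Xu]] [Sv|[Y FY Yv]].
  - exact: Spos.
  - by apply: (Fext Y FY).2; [left|right].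
  - by apply: (Fext X FX).2; [right|left].
  - have [XY|YX] := Ftot X Y FX FY.
    + by apply: (Fext Y FY).2; right => //; apply: XY.
    + by apply: (Fext X FX).2; right => //; apply: YX.
exists (S `|` A); split; last by move=> s Ss; left.
split=> // A' A'pos SAA'.
have extA' : ext A'.
  by rewrite /ext /= (setUidr (subset_trans (@subsetUl _ _ A) SAA')).
have A'A : A' `<=` A.
  apply: contrapT => nA'A; apply: (Amax A') => //.
  by split=> // t At; apply: SAA'; right.
by apply/seteqP; split=> // t A't; right; apply: A'A.
Qed.

Hypothesis fsym : forall x y, f x y = f y x.
Hypothesis flin : forall (a : R) x y z, f (a *: x + y) z = a * f x z + f y z.

Lemma premax_pi_set_q_positive (P : set B) : premax_q_positive f P ->
  forall b c, pi_set f P b -> pi_set f P c -> 0 <= qf f (b - c).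
Proof.
move=> [[_ Ppos] [M [[Mmax _] Muniq]]].
suff piM : pi_set f P `<=` M by move=> b c /piM Mb /piM Mc; apply: Mmax.1.2.
move=> b pib.
have Pbpos : q_positive f (P `|` [set b]).
  split; first by exists b; right.
  move=> u v [Pu|->] [Pv|->]; [exact: Ppos| |exact: pib|by rewrite subrr qf0].
  by rewrite (qfBC fsym flin); apply: pib.
have [M' [M'max PbM']] := q_positive_sub_max Pbpos.
by rewrite -(Muniq M' M'max) //; [apply: PbM'; right | move=> t Pt; apply: PbM'; left].
Qed.

End MaximalExtension.

Section PhiTheory.
Variables (R : realType) (B : lmodType R) (f : B -> B -> R) (P : set B).
Hypothesis fsym : forall x y, f x y = f y x.
Hypothesis flin : forall (a : R) x y z, f (a *: x + y) z = a * f x z + f y z.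

Local Notation Phi := (Phi f P).
Local Notation qf := (qf f).

Lemma Phi_leP x K :
  (Phi x <= K%:E)%E <-> forall a, P a -> f x a - qf a <= K.
Proof.
split=> [Phi_le a Pa|bounded].
  by rewrite -lee_fin; apply: le_trans Phi_le; apply: ereal_sup_ubound; exists a.
by apply/ereal_supP => _ [a Pa <-]; rewrite lee_fin; apply: bounded.
Qed.

Lemma pi_setE x : pi_set f P x <-> (Phi x <= (qf x)%:E)%E.
Proof.
rewrite Phi_leP; split=> pi_x a Pa; have := pi_x a Pa; rewrite qfB //; lra.
Qed.

Lemma dom_PhiP x : dom_Phi f P x <-> exists K, (Phi x <= K%:E)%E.
Proof.
rewrite /dom_Phi /=; split=> [|[K Phi_le]]; last exact: le_lt_trans Phi_le (ltry K).
by case: (Phi x) => [r _|//|_]; [exists r | exists 0; rewrite leNye].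
Qed.

Lemma pi_set_sub_dom_Phi : pi_set f P `<=` dom_Phi f P.
Proof. by move=> x /pi_setE Phi_le; apply/dom_PhiP; exists (qf x). Qed.

Lemma Phi_comb_le l x y Kx Ky : 0 <= l <= 1 ->
  (Phi x <= Kx%:E)%E -> (Phi y <= Ky%:E)%E ->
  (Phi (l *: x + (1 - l) *: y) <= (l * Kx + (1 - l) * Ky)%:E)%E.
Proof.
move=> /andP[l_ge0 l_le1] /Phi_leP Phix /Phi_leP Phiy; apply/Phi_leP => a Pa.
have -> : f (l *: x + (1 - l) *: y) a - qf a
          = l * (f x a - qf a) + (1 - l) * (f y a - qf a) by rewrite f_comb //; ring.
by rewrite lerD // ler_wpM2l ?subr_ge0 ?Phix ?Phiy.
Qed.

Lemma dom_Phi_convex l x y : 0 <= l <= 1 ->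
  dom_Phi f P x -> dom_Phi f P y -> dom_Phi f P (l *: x + (1 - l) *: y).
Proof.
move=> l01 /dom_PhiP[Kx Phix] /dom_PhiP[Ky Phiy]; apply/dom_PhiP.
by exists (l * Kx + (1 - l) * Ky); apply: Phi_comb_le.
Qed.

Lemma Phi_lt_qf_gap b : (Phi b < (qf b)%:E)%E ->
  exists2 d, 0 < d & (Phi b <= (qf b - d)%:E)%E.
Proof.
case: (Phi b) => [r|//|_]; last by exists 1; rewrite ?leNye.
by rewrite lte_fin => r_lt; exists (qf b - r); rewrite ?subr_gt0 // opprB addrC subrK.
Qed.

Lemma Phi_lt_qf_step b c : (Phi b < (qf b)%:E)%E -> dom_Phi f P c ->
  exists2 s, 0 < s <= 1 &
    (Phi (s *: c + (1 - s) *: b) < (qf (s *: c + (1 - s) *: b))%:E)%E.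
Proof.
move=> /Phi_lt_qf_gap[d d_gt0 Phib] /dom_PhiP[K Phic].
have d2_gt0 : 0 < d / 2 by rewrite divr_gt0.
have [s /andP[s_gt0 s_le1] small] :=
  small_quadratic (K - qf b + d - f b (c - b)) (- qf (c - b)) d2_gt0.
exists s; first by rewrite s_gt0 s_le1.
have s01 : 0 <= s <= 1 by rewrite ltW.
apply: le_lt_trans (Phi_comb_le s01 Phic Phib) _.
rewrite qf_comb // lte_fin; nra.
Qed.

Lemma Phi_lt_qf_pi_set b : (Phi b < (qf b)%:E)%E -> pi_set f P b.
Proof. by move=> /ltW; rewrite pi_setE. Qed.

Hypothesis pi_set_pos : forall b c, pi_set f P b -> pi_set f P c -> 0 <= qf (b - c).

Lemma dom_Phi_q_positive b0 x z : (Phi b0 < (qf b0)%:E)%E ->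
  dom_Phi f P x -> dom_Phi f P z -> 0 <= qf (x - z).
Proof.
move=> Phib0 domx domz.
have domb0 := pi_set_sub_dom_Phi (Phi_lt_qf_pi_set Phib0).
have [t /andP[t_gt0 t_le1] Phibt] := Phi_lt_qf_step Phib0 domz.
set bt := t *: z + (1 - t) *: b0 in Phibt.
have domc : dom_Phi f P (t *: x + (1 - t) *: b0).
  by apply: dom_Phi_convex => //; rewrite ltW.
have [s /andP[s_gt0 _] Phip] := Phi_lt_qf_step Phibt domc.
have := pi_set_pos (Phi_lt_qf_pi_set Phip) (Phi_lt_qf_pi_set Phibt).
rewrite comb_subr subrr scaler0 addr0 comb_diff !qfZ //.
by rewrite pmulr_rge0 ?exprn_gt0 // pmulr_rge0 ?exprn_gt0.
Qed.

Hypothesis P_pos : forall b c, P b -> P c -> 0 <= qf (b - c).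

Lemma dom_Phi_eq_pi_set b0 : (Phi b0 < (qf b0)%:E)%E -> dom_Phi f P = pi_set f P.
Proof.
move=> Phib0; apply/seteqP; split; last exact: pi_set_sub_dom_Phi.
move=> x domx a Pa; apply: dom_Phi_q_positive Phib0 domx _.
by apply/pi_set_sub_dom_Phi => c Pc; apply: P_pos.
Qed.

End PhiTheory.

Theorem mainTheorem5 (R : realType) (B : lmodType R) (f : B -> B -> R)
  (P : set B) :
  SSD f -> premax_q_positive f P ->
  (forall b : B, (qf f b)%:E <= Phi f P b)%E \/
  (pi_set f P = dom_Phi f P /\ affine_set (pi_set f P)).
Proof.
move=> [_ [fsym flin]] premaxP.
have [|/existsNP[b0 /negP]] := pselect (forall b : B, (qf f b)%:E <= Phi f P b)%E.
  by left.
rewrite -ltNge => Phib0; right.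
have P_pos := premaxP.1.2.
have pi_pos := premax_pi_set_q_positive fsym flin premaxP.
have dom_pi := dom_Phi_eq_pi_set fsym flin pi_pos P_pos Phib0.
split=> // l x y pix piy a Pa.
apply: (convex_q_positive_affine fsym flin _ pi_pos) pix piy _.
- by move=> k u v k01; rewrite -dom_pi; apply: dom_Phi_convex.
- by move=> c Pc; apply: P_pos.
Qed.
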